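(* Let $k_1,k_2\ge1$ be integers. The submodule $\mathcal{J}^{12}$ of $\mathcal{F}$ generated by $\{R_{12}^{n_1,n_2,n_3}:n_i\in\mathbb{Z}\}$ equals the submodule $\mathcal{J}^{12}_{\mathbb{R},[\frac{k_2}{2},\infty)}$ generated by $J^{12}_{\mathbb{R},[\frac{k_2}{2},\infty)}=\{R^{n_1,n_2,n_3}_{12}:n_1\in\mathbb{Z},\ n_2\in\mathbb{Z},\ n_2\ge k_2/2,\ n_3\ge 0\}$.
   Context: $\mathcal{F}$ is the free $\mathbb{Z}[A^{\pm1}]$-module with basis the symbols $s_1^{l_1}s_2^{l_2}s_3^{l_3}$, $l_i\ge 0$, extended multilinearly to integer exponents by $s_i^{-1}=0$ and $s_i^{n}=-s_i^{-n-2}$ for $n\le -2$. For $n_i\in\mathbb{Z}$, $R_{12}(n_1,n_2,n_3)=-A^{-n_1-n_2-2}s_1^{n_1}s_2^{n_2}s_3^{n_3}-A^{-n_1-n_2+2}s_1^{n_1-2}s_2^{n_2-2}s_3^{n_3}-A^{-n_1-n_2}s_1^{n_1-1}s_2^{n_2-1}s_3^{n_3+1}-A^{-n_1-n_2}s_1^{n_1-1}s_2^{n_2-1}s_3^{n_3-1}$ and $R_{12}^{n_1,n_2,n_3}=R_{12}(n_1,n_2,n_3)-R_{12}(-n_1+k_1,-n_2+k_2,n_3)$. *)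

From mathcomp Require Import all_boot all_order all_algebra.
Set Implicit Arguments. Unset Strict Implicit. Unset Printing Implicit Defensive.
Import Order.TTheory GRing.Theory Num.Theory.
Local Open Scope ring_scope.

(* The free Z[A^{+-1}]-module F with basis s1^l1 s2^l2 s3^l3 (l_i >= 0).
   An element is represented by its coefficient function:
   x (l1,l2,l3) e = integer coefficient of A^e s1^l1 s2^l2 s3^l3.
   (Elements of the free module are the finitely supported such functions;
   all generators below are finitely supported, so generated submodules
   live inside the free module.) *)
Definition F := (nat * nat * nat) -> int -> int.

Definition zeroF : F := fun _ _ => 0.
Definition addF (x y : F) : F := fun m e => x m e + y m e.
Definition oppF (x : F) : F := fun m e => - x m e.
Definition subF (x y : F) : F := addF x (oppF y).
Definition shiftF (k : int) (x : F) : F := fun m e => x m (e - k).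

Definition basisF (l : nat * nat * nat) : F :=
  fun m e => if (m == l) && (e == 0) then 1 else 0.

(* s^n for integer n: s^n (n >= 0), 0 (n = -1), -s^(-n-2) (n <= -2).
   Returns None for zero, Some (negated?, exponent) otherwise. *)
Definition sexp (n : int) : option (bool * nat) :=
  match n with
  | Posz k => Some (false, k)
  | Negz 0 => None
  | Negz k.+1 => Some (true, k)      (* n = -(k+2), -n-2 = k *)
  end.

Definition mono (n1 n2 n3 : int) : F :=
  match sexp n1, sexp n2, sexp n3 with
  | Some (b1, l1), Some (b2, l2), Some (b3, l3) =>
      let v := basisF (l1, l2, l3) in
      if b1 (+) b2 (+) b3 then oppF v else v
  | _, _, _ => zeroF
  end.

Definition amono (e n1 n2 n3 : int) : F := shiftF e (mono n1 n2 n3).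

Definition R12 (n1 n2 n3 : int) : F :=
  oppF (addF (addF (amono (- n1 - n2 - 2) n1 n2 n3)
                   (amono (- n1 - n2 + 2) (n1 - 2) (n2 - 2) n3))
             (addF (amono (- n1 - n2) (n1 - 1) (n2 - 1) (n3 + 1))
                   (amono (- n1 - n2) (n1 - 1) (n2 - 1) (n3 - 1)))).

Definition R12s (k1 k2 n1 n2 n3 : int) : F :=
  subF (R12 n1 n2 n3) (R12 (- n1 + k1) (- n2 + k2) n3).

Inductive modspan (G : F -> Prop) : F -> Prop :=
| modspan_zero : modspan G zeroF
| modspan_gen x : G x -> modspan G x
| modspan_add x y : modspan G x -> modspan G y -> modspan G (addF x y)
| modspan_opp x : modspan G x -> modspan G (oppF x)
| modspan_shift k x : modspan G x -> modspan G (shiftF k x).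

Definition J12 (k1 k2 : int) : F -> Prop :=
  fun x => exists n1 n2 n3 : int, x = R12s k1 k2 n1 n2 n3.

Definition J12_half (k1 k2 : int) : F -> Prop :=
  fun x => exists n1 n2 n3 : int,
    k2 <= 2 * n2 /\ 0 <= n3 /\ x = R12s k1 k2 n1 n2 n3.

(* Two symmetries reduce every generator to one in the smaller set.
   By definition R^{n1,n2,n3} = -R^{k1-n1,k2-n2,n3}, which moves n2 into
   [k2/2, oo).  The rule s3^{-n-2} = -s3^n gives R12(n1,n2,n3) =
   -R12(n1,n2,-n3-2), since n3 +- 1 is sent to (-n3-2) -+ 1; this moves n3
   into [-1, oo), and at the fixed point n3 = -1 the generator equals its own
   negative, hence vanishes. *)

From mathcomp Require Import all_boot all_order all_algebra.
From mathcomp Require Import zify ring.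
From Stdlib Require Import FunctionalExtensionality.
Local Open Scope ring_scope.
Import GRing.Theory.

Lemma F_ext (x y : F) : (forall m e, x m e = y m e) -> x = y.
Proof.
by move=> xy; apply: functional_extensionality => m;
  apply: functional_extensionality => e.
Qed.

Lemma modspan_sub (G H : F -> Prop) :
  (forall x, G x -> modspan H x) -> forall x, modspan G x -> modspan H x.
Proof.
move=> GH x; elim=> {x} [|x /GH //|x y _ Hx _ Hy|x _ Hx|k x _ Hx].
- exact: modspan_zero.
- exact: modspan_add.
- exact: modspan_opp.
- exact: modspan_shift.
Qed.

Lemma oppFK (x : F) : oppF (oppF x) = x.
Proof. by apply: F_ext => m e; rewrite /oppF opprK. Qed.

Lemma sexp_reflect (n : int) :
  sexp (- n - 2) = omap (fun p => (~~ p.1, p.2)) (sexp n).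
Proof.
case: n => [k|[|k]] //.
- by have -> : - (Posz k) - 2 = Negz k.+1 by rewrite NegzE; lia.
- by have -> : - (Negz k.+1) - 2 = Posz k by rewrite NegzE; lia.
Qed.

Lemma mono_reflect3 (n1 n2 n3 : int) :
  mono n1 n2 (- n3 - 2) = oppF (mono n1 n2 n3).
Proof.
apply: F_ext => m e; rewrite /mono sexp_reflect /oppF.
case: (sexp n1) => [[b1 l1]|]; case: (sexp n2) => [[b2 l2]|];
  case: (sexp n3) => [[b3 l3]|] /=; rewrite /zeroF ?oppr0 //.
by case: b1; case: b2; case: b3; rewrite /oppF /= ?opprK.
Qed.

Lemma R12_reflect3 (n1 n2 n3 : int) :
  R12 n1 n2 (- n3 - 2) = oppF (R12 n1 n2 n3).
Proof.
rewrite /R12.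
have -> : - n3 - 2 + 1 = - (n3 - 1) - 2 by lia.
have -> : - n3 - 2 - 1 = - (n3 + 1) - 2 by lia.
apply: F_ext => m e; rewrite /amono /shiftF /addF /oppF !mono_reflect3 /oppF.
ring.
Qed.

Lemma R12s_reflect3 (k1 k2 n1 n2 n3 : int) :
  R12s k1 k2 n1 n2 (- n3 - 2) = oppF (R12s k1 k2 n1 n2 n3).
Proof.
apply: F_ext => m e; rewrite /R12s !R12_reflect3 /subF /addF /oppF; ring.
Qed.

Lemma R12s_swap (k1 k2 n1 n2 n3 : int) :
  R12s k1 k2 (- n1 + k1) (- n2 + k2) n3 = oppF (R12s k1 k2 n1 n2 n3).
Proof.
rewrite /R12s.
have -> : - (- n1 + k1) + k1 = n1 by lia.
have -> : - (- n2 + k2) + k2 = n2 by lia.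
apply: F_ext => m e; rewrite /subF /addF /oppF; ring.
Qed.

Lemma R12s_n3_m1 (k1 k2 n1 n2 : int) : R12s k1 k2 n1 n2 (-1) = zeroF.
Proof.
have selfopp := R12s_reflect3 k1 k2 n1 n2 (-1).
rewrite (_ : - (-1) - 2 = -1) // in selfopp.
apply: F_ext => m e; have := congr1 (fun f : F => f m e) selfopp.
rewrite /oppF /zeroF /=; lia.
Qed.

Lemma R12s_in_half_n3_ge0 (k1 k2 n1 n2 n3 : int) : 0 <= n3 ->
  modspan (J12_half k1 k2) (R12s k1 k2 n1 n2 n3).
Proof.
move=> n3_ge0; have [n2_half | n2_small] := boolP (k2 <= 2 * n2).
  by apply: modspan_gen; exists n1, n2, n3.
rewrite -(oppFK (R12s _ _ _ _ _)) -R12s_swap; apply/modspan_opp/modspan_gen.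
by exists (- n1 + k1), (- n2 + k2), n3; split=> //; lia.
Qed.

Lemma R12s_in_half (k1 k2 n1 n2 n3 : int) :
  modspan (J12_half k1 k2) (R12s k1 k2 n1 n2 n3).
Proof.
have [n3_ge0 | n3_neg] := boolP (0 <= n3); first exact: R12s_in_half_n3_ge0.
have [-> | n3_ne_m1] := eqVneq n3 (-1).
  by rewrite R12s_n3_m1; apply: modspan_zero.
rewrite -(oppFK (R12s _ _ _ _ _)) -R12s_reflect3; apply/modspan_opp.
by apply: R12s_in_half_n3_ge0; lia.
Qed.

Theorem lemma4p1 (k1 k2 : int) (hk1 : 1 <= k1) (hk2 : 1 <= k2) :
  forall x : F, modspan (J12 k1 k2) x <-> modspan (J12_half k1 k2) x.
Proof.
move=> x; split; apply: modspan_sub => {}x.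
- by case=> n1 [n2 [n3 ->]]; apply: R12s_in_half.
- by case=> n1 [n2 [n3 [_ [_ ->]]]]; apply: modspan_gen; exists n1, n2, n3.
Qed.
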